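(* An element $T\in\underline{SST}(\nu)$ is distinguished if and only if $\sum_{j=1}^k\mathrm{wt}(T_j)=0$.
   Context: Identify a partition $\lambda=(a_1\ge a_2\ge\cdots)$ with $\sum_ja_j\epsilon_j$ in $\Lambda=\bigoplus_{j\ge1}\mathbb Z\epsilon_j$; put $\omega_i=\epsilon_1+\dots+\epsilon_i$; partitions are exactly the elements of $\Lambda$ with all $\omega$-coordinates $\ge0$. For $x,y\in\Lambda$, $y\le x$ means $x-y$ has all $\omega$-coordinates $\ge0$. $\mathcal P$ = set of partitions, $\mathcal P^k$ = $k$-tuples of partitions. $SST(\nu)$ = semistandard tableaux of shape $\nu$ with entries in $\mathbb Z_{>0}$, with the standard $\mathfrak{gl}_\infty$-crystal structure (operators $\tilde e_i$, $i\ge1$). For $T\in SST(\nu)$: $\mathrm{wt}(T)=\sum_j(\#\text{entries }j)\epsilon_j$, $\varepsilon_i(T)=\max\{m\ge0:\tilde e_i^mT\ne0\}$, $\varepsilon(T)=\sum_i\varepsilon_i(T)\omega_i$. $\mathrm{CLR}^\lambda_{\alpha,\nu}=\{T\in SST(\nu):\varepsilon(T)\le\alpha,\ \alpha+\mathrm{wt}(T)=\lambda\}$. Fix $k\ge1$ and partitions $\nu=(\nu_1^+,\nu_1^-,\dots,\nu_k^+,\nu_k^-)$; indices cyclic mod $k$ ($\lambda_0:=\lambda_k$). $\underline{SST}(\nu)=\prod_{i=1}^kSST(\nu_i^+)\times SST(\nu_i^-)$, elements $T=(T_1^+,T_1^-,\dots,T_k^+,T_k^-)$, $T_i=(T_i^+,T_i^-)$,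 $\mathrm{wt}(T_i)=\mathrm{wt}(T_i^+)-\mathrm{wt}(T_i^-)$. For $\lambda,\alpha\in\mathcal P^k$, $\underline{\mathrm{CLR}}^\lambda_{\alpha,\nu}=\prod_{i=1}^k\mathrm{CLR}^{\lambda_i}_{\alpha_i,\nu_i^+}\times\mathrm{CLR}^{\lambda_{i-1}}_{\alpha_i,\nu_i^-}$. $T\in\underline{SST}(\nu)$ is called distinguished if $T\in\underline{\mathrm{CLR}}^\lambda_{\alpha,\nu}$ for some $\lambda,\alpha\in\mathcal P^k$. *)

From mathcomp Require Import all_boot all_order all_algebra.
Set Implicit Arguments. Unset Strict Implicit. Unset Printing Implicit Defensive.
Import Order.TTheory GRing.Theory Num.Theory.

(* An element x of Lambda is represented by its eps-coordinates
   j |-> x_j (j >= 1); coordinate 0 is unused and always 0 for the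
   elements built below. *)
Definition lam := nat -> int.

Definition omega_coord (x : lam) (i : nat) : int := (x i - x i.+1)%R.

Definition lam_le (y x : lam) : Prop :=
  forall i, (0 < i)%N -> (0 <= omega_coord (fun j => x j - y j) i)%R.

Definition is_partition (p : seq nat) : bool :=
  sorted geq p && all (fun a => 0 < a) p.

Definition plam (p : seq nat) : lam :=
  fun j => if j == 0 then 0%R else Posz (nth 0 p j.-1).

(* a tableau is the list of its rows (top row first), English convention *)
Definition tableau := seq (seq nat).

Definition is_SST (nu : seq nat) (t : tableau) : Prop :=
  [/\ map size t = nu,
      all (fun a => 0 < a) (flatten t),
      all (sorted leq) t &
      forall r c, c < size (nth [::] t r.+1) ->
        nth 0 (nth [::] t r) c < nth 0 (nth [::] t r.+1) c].

Definition wt (t : tableau) : lam := fun j => Posz (count_mem j (flatten t)).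

Definition reading_word (t : tableau) : seq nat := flatten (rev t).

(* signature rule: letters i+1 act as '(' and letters i as ')'; a letter
   i+1 is unmatched iff no free i remains in the suffix after it.
   free i s = number of letters i of s not matched by an i+1 of s. *)
Definition free (i : nat) (s : seq nat) : nat :=
  foldr (fun a c => if a == i then c.+1 else if a == i.+1 then c.-1 else c) 0 s.

(* e_i on words: change the leftmost unmatched i+1 into i (None = 0) *)
Fixpoint e_word (i : nat) (w : seq nat) : option (seq nat) :=
  match w with
  | [::] => None
  | a :: s => if (a == i.+1) && (free i s == 0) then Some (i :: s)
              else omap (cons a) (e_word i s)
  end.

(* e_i on tableaux: act on the reading word, then refill the same shape *)
Definition e_tab (i : nat) (t : tableau) : option tableau :=
  omap (fun w => rev (reshape (map size (rev t)) w)) (e_word i (reading_word t)).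

Definition iter_e (i m : nat) (t : tableau) : option tableau :=
  iter m (fun o => obind (e_tab i) o) (Some t).

(* eps_i(T) = max { m >= 0 : e_i^m T <> 0 }  (m is bounded by the number
   of entries, since each application turns an i+1 into an i) *)
Definition eps_i (i : nat) (t : tableau) : nat :=
  \max_(m < (size (flatten t)).+1 | iter_e i m t != None) m.

(* largest entry; eps_i(T) = 0 for i >= maxentry T *)
Definition maxentry (t : tableau) : nat := foldr maxn 0 (flatten t).

(* eps(T) = sum_{i>=1} eps_i(T) omega_i ; omega_i = eps_1 + ... + eps_i,
   so the eps_j-coordinate (j >= 1) is sum_{i >= j} eps_i(T). *)
Definition eps_vec (t : tableau) : lam :=
  fun j => if j == 0 then 0%R else Posz (\sum_(j <= i < maxentry t) eps_i i t).

Definition inCLR (lambda alpha nu : seq nat) (t : tableau) : Prop :=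
  [/\ is_SST nu t, lam_le (eps_vec t) (plam alpha) &
      forall j, (plam alpha j + wt t j)%R = plam lambda j].

(* Indices i = 0..k-1 (standing for 1..k); predecessor mod k. *)
Definition cpred (k i : nat) : nat := (i + k.-1) %% k.

(* nu i = (nu_i^+, nu_i^-),  T i = (T_i^+, T_i^-) *)
Definition distinguished (k : nat) (nu : nat -> seq nat * seq nat)
  (T : nat -> tableau * tableau) : Prop :=
  exists (lambda alpha : nat -> seq nat),
    (forall i, i < k -> is_partition (lambda i) /\ is_partition (alpha i)) /\
    (forall i, i < k ->
       inCLR (lambda i) (alpha i) (nu i).1 (T i).1 /\
       inCLR (lambda (cpred k i)) (alpha i) (nu i).2 (T i).2).

From mathcomp Require Import all_boot all_order all_algebra zify.
Import Order.TTheory GRing.Theory Num.Theory.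
Set Implicit Arguments. Unset Strict Implicit. Unset Printing Implicit Defensive.

(** If [T] is distinguished then [wt T_i = lambda_i - lambda_(i-1)], so the
    weights telescope to [0] around the cycle.  Conversely, let [P_i] and [Q_i]
    be the sums of the weights of [T_1^+, ..., T_i^+] and of
    [T_1^-, ..., T_i^-], and take [lambda_i = S + P_i - Q_i] and
    [alpha_i = S + P_(i-1) - Q_i] over a steep staircase [S]; the vanishing
    total weight [P_k = Q_k] makes [lambda_k = lambda_0] and closes the cycle.
    The crystal condition [eps(T) <= alpha] costs nothing: [eps_i(T)] is at
    most the number of entries of [T], and the steps of the staircase can be
    made larger than that. *)

Lemma cpred0 k : 0 < k -> cpred k 0 = k.-1.
Proof. by move=> k_gt0; rewrite /cpred add0n modn_small // prednK. Qed.

Lemma cpredS k i : i.+1 < k -> cpred k i.+1 = i.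
Proof.
move=> lt_ik; rewrite /cpred addSn -addnS prednK ?(leq_ltn_trans _ lt_ik) //.
by rewrite modnDr modn_small // ltnW.
Qed.

Lemma cpred_lt k i : 0 < k -> cpred k i < k.
Proof. exact: ltn_pmod. Qed.

Lemma telescope_cpred (V : zmodType) k (g : nat -> V) : 0 < k ->
  (\sum_(i < k) (g i - g (cpred k i)) = 0)%R.
Proof.
case: k => // k _; apply/eqP; rewrite sumrB subr_eq0; apply/eqP.
rewrite big_ord_recr [RHS]big_ord_recl /= cpred0 // addrC; congr (_ + _)%R.
by apply: eq_bigr => i _; rewrite /= cpredS ?ltnS.
Qed.

Lemma inCLR_wt lambda alpha nu t j :
  inCLR lambda alpha nu t -> wt t j = (plam lambda j - plam alpha j)%R.
Proof. by case=> _ _ /(_ j) <-; rewrite addrAC subrr add0r. Qed.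

Lemma wt_SST0 nu t : is_SST nu t -> wt t 0 = 0%R.
Proof.
case=> _ /allP entries_gt0 _ _; congr Posz; apply/count_memPn.
by apply/negP => /entries_gt0.
Qed.

Lemma wt_gt_maxentry t j : maxentry t < j -> wt t j = 0%R.
Proof.
rewrite /maxentry => lt_max_j; congr Posz; apply/count_memPn; apply/negP.
elim: (flatten t) lt_max_j => //= a s IHs; rewrite gtn_max => /andP[lt_aj lt_sj].
by rewrite inE => /orP[/eqP ja | /(IHs lt_sj)//]; rewrite ja ltnn in lt_aj.
Qed.

Lemma eps_i_le_size i t : eps_i i t <= size (flatten t).
Proof. by apply/bigmax_leqP => m _; rewrite -ltnS. Qed.

Lemma omega_coord_eps_vec t i : 0 < i ->
  omega_coord (eps_vec t) i = if i < maxentry t then Posz (eps_i i t) else 0%R.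
Proof.
case: i => // i _; rewrite /omega_coord /eps_vec /=.
case: ltnP => [lt_i_max | le_max_i]; first by rewrite big_ltn // PoszD addrK.
by rewrite !big_geq // (leq_trans le_max_i).
Qed.

Lemma lam_le_eps_vec t (x : lam) :
  (forall i, 0 < i -> i < maxentry t -> (Posz (size (flatten t)) <= omega_coord x i)%R) ->
  (forall i, 0 < i -> (0 <= omega_coord x i)%R) ->
  lam_le (eps_vec t) x.
Proof.
move=> x_steep x_dom i i_gt0; have := omega_coord_eps_vec t i_gt0.
have := x_dom i i_gt0; rewrite /omega_coord.
case: ltnP => [lt_i_max | _] eps_i_t; last lia.
have := x_steep i i_gt0 lt_i_max; have := eps_i_le_size i t; rewrite /omega_coord; lia.
Qed.

Definition seq_of_lam (N : nat) (x : lam) : seq nat := mkseq (fun j => `|x j.+1|%N) N.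

Lemma plam_seq_of_lam N (x : lam) :
  x 0 = 0%R -> (forall j, N < j -> x j = 0%R) -> (forall j, 0 < j <= N -> (0 <= x j)%R) ->
  plam (seq_of_lam N x) =1 x.
Proof.
move=> x0 x_supp x_ge0 [|j] //; rewrite /plam /seq_of_lam /=.
case: (ltnP j N) => [lt_jN | le_Nj]; last by rewrite nth_default ?size_mkseq // x_supp.
by rewrite nth_mkseq // abszE ger0_norm // x_ge0.
Qed.

Lemma seq_of_lam_partition N (x : lam) :
  (forall j, 0 < j <= N -> (0 < x j)%R) -> (forall j, 0 < j < N -> (x j.+1 <= x j)%R) ->
  is_partition (seq_of_lam N x).
Proof.
move=> x_gt0 x_decr; apply/andP; split.
  apply/(sortedP 0) => i; rewrite size_mkseq => lt_i1N.
  rewrite !nth_mkseq ?(ltnW lt_i1N) //=.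
  have := x_gt0 i.+1; have := x_gt0 i.+2; have := x_decr i.+1; lia.
apply/allP => a /mapP[j]; rewrite mem_iota => /andP[_ lt_jN] ->.
have := x_gt0 j.+1; lia.
Qed.

Definition staircase (c N : nat) : lam :=
  fun j => if j == 0 then 0%R else Posz (c * (N.+1 - j)).

Lemma staircase_step c N j : 0 < j <= N ->
  staircase c N j = (staircase c N j.+1 + Posz c)%R.
Proof.
case: j => // j /andP[_ le_jN]; rewrite /staircase /= -PoszD -mulnSr.
by rewrite subSS subnSK.
Qed.

Lemma staircase_ge0 c N j : (0 <= staircase c N j)%R.
Proof. by rewrite /staircase; case: eqP. Qed.

Lemma staircase_gt_N c N j : N < j -> staircase c N j = 0%R.
Proof. by rewrite -subn_eq0 /staircase => /eqP ->; rewrite muln0 if_same. Qed.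

Section PerturbedStaircase.

Variables (B N : nat) (D : lam).
Hypotheses (D0 : D 0 = 0%R) (D_gt_N : forall j, N < j -> D j = 0%R)
  (D_bounded : forall j, (`|D j| <= Posz B)%R).

(** Steps of height [3B + 1] survive a perturbation of size [B] with room to
    spare: every step of the result exceeds [B]. *)
Definition perturbed_staircase : lam := fun j => (staircase (3 * B).+1 N j + D j)%R.

Lemma perturbed_staircase_step j : 0 < j <= N ->
  (Posz B < perturbed_staircase j - perturbed_staircase j.+1)%R.
Proof.
move=> j_in; rewrite /perturbed_staircase (staircase_step _ j_in).
have := D_bounded j; have := D_bounded j.+1; lia.
Qed.

Lemma perturbed_staircase_gt_N j : N < j -> perturbed_staircase j = 0%R.
Proof. by move=> lt_Nj; rewrite /perturbed_staircase staircase_gt_N ?D_gt_N. Qed.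

Lemma perturbed_staircase_gt0 j : 0 < j <= N -> (0 < perturbed_staircase j)%R.
Proof.
move=> j_in; have := perturbed_staircase_step j_in.
have := staircase_ge0 (3 * B).+1 N j.+1; have := D_bounded j; have := D_bounded j.+1.
rewrite /perturbed_staircase; lia.
Qed.

Lemma plam_perturbed_staircase :
  plam (seq_of_lam N perturbed_staircase) =1 perturbed_staircase.
Proof.
apply: plam_seq_of_lam; first by rewrite /perturbed_staircase D0.
  exact: perturbed_staircase_gt_N.
by move=> j /perturbed_staircase_gt0/ltW.
Qed.

Lemma perturbed_staircase_partition : is_partition (seq_of_lam N perturbed_staircase).
Proof.
apply: seq_of_lam_partition => [|j /andP[j_gt0 lt_jN]]; first exact: perturbed_staircase_gt0.
have j_in : 0 < j <= N by rewrite j_gt0 ltnW.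
have := perturbed_staircase_step j_in; lia.
Qed.

Lemma eps_vec_le_perturbed_staircase t :
  size (flatten t) <= B -> maxentry t <= N -> lam_le (eps_vec t) perturbed_staircase.
Proof.
move=> size_t max_t; apply: lam_le_eps_vec => i i_gt0; rewrite /omega_coord.
  move=> lt_i_max; have i_in : 0 < i <= N by rewrite i_gt0 ltnW ?(leq_trans lt_i_max max_t).
  have := perturbed_staircase_step i_in; lia.
case: (leqP i N) => [le_iN | lt_Ni].
  have i_in : 0 < i <= N by rewrite i_gt0.
  have := perturbed_staircase_step i_in; lia.
by rewrite !perturbed_staircase_gt_N // ltnW.
Qed.

End PerturbedStaircase.

Definition cumwt (t : nat -> tableau) (i : nat) : lam :=
  fun j => (\sum_(m < i) wt (t m) j)%R.

Definition total_size (t : nat -> tableau) (k : nat) : nat :=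
  \sum_(m < k) size (flatten (t m)).

Lemma cumwtS t i j : cumwt t i.+1 j = (cumwt t i j + wt (t i) j)%R.
Proof. by rewrite /cumwt big_ord_recr. Qed.

Lemma cumwt_bounds t i j : (0 <= cumwt t i j <= Posz (total_size t i))%R.
Proof.
elim: i => [|i IHi]; first by rewrite /cumwt /total_size !big_ord0.
rewrite cumwtS /total_size big_ord_recr -/(total_size t i) /= PoszD.
have : (wt (t i) j <= Posz (size (flatten (t i))))%R by rewrite lez_nat count_size.
by rewrite /wt; lia.
Qed.

Lemma total_size_mono t : {homo total_size t : i k / i <= k}.
Proof.
by apply: homo_leq leqnn leq_trans _ => i; rewrite /total_size big_ord_recr leq_addr.
Qed.

Lemma size_le_total_size t i k : i < k -> size (flatten (t i)) <= total_size t k.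
Proof.
move=> lt_ik; apply: leq_trans (total_size_mono t lt_ik).
by rewrite /total_size big_ord_recr leq_addl.
Qed.

Lemma cumwt_gt_maxentry t i j : (forall m, m < i -> maxentry (t m) < j) ->
  cumwt t i j = 0%R.
Proof.
by move=> lt_max_j; apply: big1 => m _; apply/wt_gt_maxentry/lt_max_j.
Qed.

Lemma cumwt_at0 t i : (forall m, m < i -> wt (t m) 0 = 0%R) -> cumwt t i 0 = 0%R.
Proof. by move=> wt0; apply: big1 => m _; apply: wt0. Qed.

Lemma cumwt_cpred t1 t2 k i j : i < k -> cumwt t1 k j = cumwt t2 k j ->
  (cumwt t1 (cpred k i).+1 j - cumwt t2 (cpred k i).+1 j = cumwt t1 i j - cumwt t2 i j)%R.
Proof.
case: i => [|i] lt_ik balanced; last by rewrite cpredS.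
by rewrite cpred0 // prednK // balanced /cumwt !big_ord0 !subrr.
Qed.

Section Construction.

Variables (k : nat) (t1 t2 : nat -> tableau).
Hypotheses (t1_wt0 : forall m, m < k -> wt (t1 m) 0 = 0%R)
  (t2_wt0 : forall m, m < k -> wt (t2 m) 0 = 0%R).

Definition content_bound : nat := total_size t1 k + total_size t2 k.

Definition entry_bound : nat := \max_(m < k) maxn (maxentry (t1 m)) (maxentry (t2 m)).

Lemma le_content_bound m : m < k ->
  size (flatten (t1 m)) <= content_bound /\ size (flatten (t2 m)) <= content_bound.
Proof.
move=> lt_mk; rewrite /content_bound.
split; [apply: leq_trans (leq_addr _ _) | apply: leq_trans (leq_addl _ _)];
  exact: size_le_total_size.
Qed.

Lemma le_entry_bound m : m < k ->
  maxentry (t1 m) <= entry_bound /\ maxentry (t2 m) <= entry_bound.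
Proof.
move=> lt_mk.
have := @leq_bigmax _ (fun m : 'I_k => maxn (maxentry (t1 m)) (maxentry (t2 m))) (Ordinal lt_mk).
by rewrite geq_max => /andP.
Qed.

Definition cumwt_diff (a b : nat) : lam := fun j => (cumwt t1 a j - cumwt t2 b j)%R.

Lemma cumwt_diff_perturbation a b : a <= k -> b <= k ->
  [/\ cumwt_diff a b 0 = 0%R, forall j, entry_bound < j -> cumwt_diff a b j = 0%R &
      forall j, (`|cumwt_diff a b j| <= Posz content_bound)%R].
Proof.
move=> le_ak le_bk; rewrite /cumwt_diff; split.
- by rewrite !cumwt_at0 ?subrr // => m lt_mb;
    [apply: t2_wt0 (leq_trans lt_mb le_bk) | apply: t1_wt0 (leq_trans lt_mb le_ak)].
- move=> j lt_Nj; rewrite !cumwt_gt_maxentry ?subrr // => m lt_m;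
    [have [_ max_m] := le_entry_bound (leq_trans lt_m le_bk)
    | have [max_m _] := le_entry_bound (leq_trans lt_m le_ak)];
    exact: leq_ltn_trans max_m lt_Nj.
- move=> j; have := cumwt_bounds t1 a j; have := cumwt_bounds t2 b j.
  have := total_size_mono t1 le_ak; have := total_size_mono t2 le_bk.
  rewrite /content_bound; lia.
Qed.

Definition cumwt_shape (a b : nat) : seq nat :=
  seq_of_lam entry_bound (perturbed_staircase content_bound entry_bound (cumwt_diff a b)).

Lemma cumwt_shape_partition a b : a <= k -> b <= k -> is_partition (cumwt_shape a b).
Proof.
by move=> le_ak le_bk; have [? ? ?] := cumwt_diff_perturbation le_ak le_bk;
  apply: perturbed_staircase_partition.
Qed.

Lemma plam_cumwt_shape a b j : a <= k -> b <= k ->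
  plam (cumwt_shape a b) j =
  (staircase (3 * content_bound).+1 entry_bound j + (cumwt t1 a j - cumwt t2 b j))%R.
Proof.
by move=> le_ak le_bk; have [? ? ?] := cumwt_diff_perturbation le_ak le_bk;
  rewrite plam_perturbed_staircase.
Qed.

Lemma eps_vec_le_cumwt_shape a b t : a <= k -> b <= k ->
  size (flatten t) <= content_bound -> maxentry t <= entry_bound ->
  lam_le (eps_vec t) (plam (cumwt_shape a b)).
Proof.
move=> le_ak le_bk size_t max_t i i_gt0.
have [D0 D_gt_N D_bounded] := cumwt_diff_perturbation le_ak le_bk.
rewrite /omega_coord !plam_perturbed_staircase //.
exact: (eps_vec_le_perturbed_staircase D0 D_gt_N D_bounded size_t max_t).
Qed.

End Construction.

Theorem mainTheorem8 (k : nat) (nu : nat -> seq nat * seq nat)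
  (T : nat -> tableau * tableau) :
  0 < k ->
  (forall i, i < k -> is_partition (nu i).1 /\ is_partition (nu i).2) ->
  (forall i, i < k -> is_SST (nu i).1 (T i).1 /\ is_SST (nu i).2 (T i).2) ->
  (distinguished k nu T <->
   forall j : nat, (\sum_(i < k) (wt (T i).1 j - wt (T i).2 j) = 0)%R).
Proof.
move=> k_gt0 _ T_SST; split.
  case=> lambda [alpha [_ T_CLR]] j.
  rewrite -[RHS](telescope_cpred (fun i => plam (lambda i) j) k_gt0).
  apply: eq_bigr => i _; have [/inCLR_wt -> /inCLR_wt ->] := T_CLR i (ltn_ord i).
  by rewrite opprB addrA subrK.
move=> weight_free; pose t1 i := (T i).1; pose t2 i := (T i).2.
have balanced j : cumwt t1 k j = cumwt t2 k j.
  by apply/eqP; rewrite -subr_eq0 /cumwt -sumrB weight_free.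
have t1_wt0 m : m < k -> wt (t1 m) 0 = 0%R by case/T_SST => /wt_SST0 ->.
have t2_wt0 m : m < k -> wt (t2 m) 0 = 0%R by case/T_SST => _ /wt_SST0 ->.
pose shape := cumwt_shape k t1 t2.
have plam_shape := plam_cumwt_shape t1_wt0 t2_wt0.
exists (fun i => shape i.+1 i.+1), (fun i => shape i i.+1).
split=> i lt_ik.
  by split; apply: (cumwt_shape_partition t1_wt0 t2_wt0) => //; apply: ltnW.
have [SST1 SST2] := T_SST i lt_ik.
have [size1 size2] := le_content_bound t1 t2 lt_ik.
have [max1 max2] := le_entry_bound t1 t2 lt_ik.
have eps_le_alpha := eps_vec_le_cumwt_shape t1_wt0 t2_wt0 (ltnW lt_ik) lt_ik.
have lt_ck := cpred_lt i k_gt0.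
split; split => //; try exact: eps_le_alpha.
  by move=> j; rewrite !plam_shape ?(ltnW lt_ik) // !cumwtS /t1 /t2; lia.
move=> j; rewrite !plam_shape ?(ltnW lt_ik) // cumwt_cpred // !cumwtS /t1 /t2; lia.
Qed.
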